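(* Let $(G,\ell)$ be a complete edge-colored permutation graph, where $G=(V,E_1,\dots,E_k)$. Then $G$ does not contain a rainbow triangle, and for each $i\in\{1,\dots,k\}$ the monochromatic subgraph $G_{|i}$ together with $\ell$ is a simple permutation graph.
   Context: A complete $k$-edge-colored graph $G=(V,E_1,\dots,E_k)$ is the complete graph on a finite set $V$ with edges partitioned into $k$ nonempty color classes $E_i$; $G_{|i}=(V,E_i)$. A labeling is a bijection $\ell:V\to\{1,\dots,|V|\}$. A graph $(V,E)$ with labeling $\ell$ is a simple permutation graph of a permutation $\pi$ if for all $u,v$ with $\ell(u)>\ell(v)$: $\{u,v\}\in E$ iff $\pi^{-1}(\ell(u))<\pi^{-1}(\ell(v))$. $(G,\ell)$ is a complete edge-colored permutation graph if there exist permutations $\pi_1,\dots,\pi_k$ with $(G_{|i},\ell)$ a simple permutation graph of $\pi_i$ for all $i$. A rainbow triangle is a set of three vertices whose three edges have pairwise distinct colors. *)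

From mathcomp Require Import all_boot all_order all_fingroup.
Set Implicit Arguments. Unset Strict Implicit. Unset Printing Implicit Defensive.

(* A complete k-edge-colored graph on a finite vertex type V is given by a
   colouring c : V -> V -> 'I_k of the (unordered) pairs of distinct vertices:
   c must be symmetric and every colour class must be nonempty.  Values of
   c x x are irrelevant. *)
Definition complete_colored (V : finType) (k : nat) (c : V -> V -> 'I_k) : Prop :=
  (forall u v, c u v = c v u) /\
  (forall i : 'I_k, exists u v, u != v /\ c u v = i).

Definition mono (V : finType) (k : nat) (c : V -> V -> 'I_k) (i : 'I_k) : rel V :=
  fun u v => (u != v) && (c u v == i).

(* Labeling: bijection V -> {1..|V|}, encoded 0-based as V -> 'I_#|V|. *)
Definition labeling (V : finType) (l : V -> 'I_#|V|) : Prop := bijective l.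

Definition simple_perm_graph_of (V : finType) (E : rel V) (l : V -> 'I_#|V|)
  (pi : {perm 'I_#|V|}) : Prop :=
  forall u v, (l v < l u)%N ->
    (E u v <-> (pi^-1%g (l u) < pi^-1%g (l v))%N).

Definition simple_perm_graph (V : finType) (E : rel V) (l : V -> 'I_#|V|) : Prop :=
  exists pi : {perm 'I_#|V|}, simple_perm_graph_of E l pi.

Definition colored_perm_graph (V : finType) (k : nat) (c : V -> V -> 'I_k)
  (l : V -> 'I_#|V|) : Prop :=
  exists pis : 'I_k -> {perm 'I_#|V|},
    forall i : 'I_k, simple_perm_graph_of (mono c i) l (pis i).

Definition rainbow_triangle (V : finType) (k : nat) (c : V -> V -> 'I_k)
  (x y z : V) : Prop :=
  [/\ x != y, y != z, x != z &
      [/\ c x y != c y z, c x y != c x z & c y z != c x z]].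

From mathcomp Require Import all_boot all_order all_fingroup.

Set Implicit Arguments.
Unset Strict Implicit.
Unset Printing Implicit Defensive.

(* The edges of a simple permutation graph are the pairs whose order under the
   labelling is inverted by pi^-1.  If the pair l u < l w is inverted, then for
   every l v in between one of the pairs (u, v), (v, w) is inverted as well,
   since otherwise pi^-1 would be nondecreasing along u, v, w.  Applied to the
   colour class of the edge uw, this says that uw has the colour of uv or of vw,
   so no triangle is rainbow. *)

Lemma perm_graph_edge_between (V : finType) (E : rel V) (l : V -> 'I_#|V|)
    (pi : {perm 'I_#|V|}) (u v w : V) :
  simple_perm_graph_of E l pi -> (l u < l v)%N -> (l v < l w)%N ->
  E w u -> E v u \/ E w v.
Proof.
move=> Epi luv lvw /(Epi _ _ (ltn_trans luv lvw)) inv_uw.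
case: (ltnP (pi^-1%g (l v)) (pi^-1%g (l u))) => [inv_uv | le_uv].
  by left; apply/(Epi _ _ luv).
by right; apply/(Epi _ _ lvw); apply: leq_trans inv_uw le_uv.
Qed.

Section ColoredPermGraph.

Variables (V : finType) (k : nat) (c : V -> V -> 'I_k) (l : V -> 'I_#|V|).
Hypothesis c_sym : forall u v, c u v = c v u.

Lemma rainbow_triangle_swap12 x y z :
  rainbow_triangle c x y z -> rainbow_triangle c y x z.
Proof.
case=> ? ? ? [? ? ?].
rewrite /rainbow_triangle (c_sym y x).
by do !split; by [|rewrite eq_sym].
Qed.

Lemma rainbow_triangle_swap23 x y z :
  rainbow_triangle c x y z -> rainbow_triangle c x z y.
Proof.
case=> ? ? ? [? ? ?].
rewrite /rainbow_triangle (c_sym z y).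
by do !split; by [|rewrite eq_sym].
Qed.

Hypothesis c_perm : colored_perm_graph c l.

Lemma colored_perm_graph_color_between u v w :
  (l u < l v)%N -> (l v < l w)%N -> c u w = c u v \/ c u w = c v w.
Proof.
move=> luv lvw; have [pis Hpis] := c_perm.
have wu : w != u.
  by apply: contraTneq (ltn_trans luv lvw) => ->; rewrite ltnn.
have := perm_graph_edge_between (Hpis (c u w)) luv lvw.
rewrite /mono wu (c_sym w u) eqxx => /(_ isT).
case=> /andP[_ /eqP <-]; [left; exact: c_sym | right; exact: c_sym].
Qed.

Lemma sorted_triangle_not_rainbow u v w :
  (l u < l v)%N -> (l v < l w)%N -> ~ rainbow_triangle c u v w.
Proof.
move=> luv lvw [_ _ _ [_ cuv_uw cvw_uw]].
by case: (colored_perm_graph_color_between luv lvw) => cuw;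
  [move: cuv_uw | move: cvw_uw]; rewrite cuw eqxx.
Qed.

Hypothesis l_inj : injective l.

Lemma no_rainbow_triangle x y z : ~ rainbow_triangle c x y z.
Proof.
wlog lxy : x y z / (l x < l y)%N.
  move=> hw R; have [xy _ _ _] := R.
  case: (ltngtP (l x) (l y)) => [lxy | lyx | /val_inj/l_inj exy].
  - exact: hw lxy R.
  - exact: hw lyx (rainbow_triangle_swap12 R).
  - by rewrite exy eqxx in xy.
move=> R; have [_ yz xz _] := R.
case: (ltngtP (l y) (l z)) => [lyz | lzy | /val_inj/l_inj eyz].
- exact: sorted_triangle_not_rainbow lxy lyz R.
- case: (ltngtP (l x) (l z)) => [lxz | lzx | /val_inj/l_inj exz].
  + exact: sorted_triangle_not_rainbow lxz lzy (rainbow_triangle_swap23 R).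
  + apply: sorted_triangle_not_rainbow lzx lxy _.
    exact: rainbow_triangle_swap12 (rainbow_triangle_swap23 R).
  + by rewrite exz eqxx in xz.
- by rewrite eyz eqxx in yz.
Qed.

End ColoredPermGraph.

Theorem proposition4p13 (V : finType) (k : nat) (c : V -> V -> 'I_k)
  (l : V -> 'I_#|V|) :
  complete_colored c -> labeling l -> colored_perm_graph c l ->
  (forall x y z : V, ~ rainbow_triangle c x y z) /\
  (forall i : 'I_k, simple_perm_graph (mono c i) l).
Proof.
move=> [c_sym _] /bij_inj l_inj c_perm; split.
  exact: no_rainbow_triangle c_sym c_perm l_inj.
by case: c_perm => pis Hpis i; exists (pis i).
Qed.
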